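(* Let $S=\mathbb{R}$ or $S=\mathbb{C}$ and let $X$ be a vector space over $S$, viewed as an algebra $a\colon\mathcal{M}_S(X)\to X$ of the multiset monad ($a(\sum_j s_jx_j)=\sum_j s_j\cdot x_j$). Then $\overline{\mathcal{M}_S}$-coalgebras (bases in the coalgebraic sense) on $X$ correspond bijectively to Hamel bases of $X$: a Hamel basis $B$ gives the coalgebra $b(x)=\sum_j s_j a_j$, where $x=\sum_j s_j\cdot a_j$ is the unique expansion of $x$ with $a_j\in B$; conversely, for a coalgebra $b$ the set $X_b=\{x\in X\mid b(x)=1x\}$ is a Hamel basis of $X$, and $b$ is the coordinate-expansion map with respect to it.
   Context: For a semiring $S$, the multiset monad $\mathcal{M}_S$ on $\mathbf{Sets}$ is $\mathcal{M}_S(X)=\{\varphi\colon X\to S\mid \mathrm{supp}(\varphi)\text{ finite}\}$, written as formal finite sums $\sum_i s_ix_i$; unit $\eta(x)=1x$; multiplication $\mu(\sum_i s_i\varphi_i)(x)=\sum_i s_i\cdot\varphi_i(x)$. Its Eilenberg–Moore algebras are $S$-modules. The induced comonad $\overline{\mathcal{M}_S}$ on modules sends a module $X$ to the free module $\mathcal{M}_S(X)$ on its underlying set, with counit $\varepsilon(\sum_j s_jx_j)=\sum_j s_j\cdot x_j$ (the actual sum in $X$) and comultiplication $\delta(\sum_j s_jx_j)=\sum_j s_j(1x_j)$. A $\overline{\mathcal{M}_S}$-coalgebra on $X$ is a module map $b\colon X\to\mathcal{M}_S(X)$ with $\varepsilon\circ b=\mathrm{id}$ and $\delta\circ b=\mathcal{M}_S(b)\circ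 b$. *)

From HB Require Import structures.
From mathcomp Require Import all_boot all_order all_algebra.
From Stdlib Require Import ClassicalEpsilon.
Set Implicit Arguments. Unset Strict Implicit. Unset Printing Implicit Defensive.
Import GRing.Theory.
Local Open Scope ring_scope.

Section Multiset.
Variable K : fieldType.

(* Elements of M_K(Y) are functions Y -> K with finite support. *)
Definition finsupp (Y : Type) (f : Y -> K) : Prop :=
  exists s : seq Y, forall y, f y <> 0 -> List.In y s.

(* A duplicate-free list enumerating exactly the support of f
   (meaningful when f is finitely supported), chosen classically. *)
Definition fsupp (Y : Type) (f : Y -> K) : seq Y :=
  epsilon (inhabits [::])
    (fun s => List.NoDup s /\ forall y, List.In y s <-> f y <> 0).

Definition meta (Y : eqType) (x : Y) : Y -> K :=
  fun y => if y == x then 1 else 0.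

Definition mmap (Y Z : Type) (g : Y -> Z) (f : Y -> K) : Z -> K :=
  fun z => \sum_(y <- fsupp f)
             (if excluded_middle_informative (g y = z) then f y else 0).

Definition mcounit (X : lmodType K) (f : X -> K) : X :=
  \sum_(x <- fsupp f) f x *: x.

Definition mcomult (X : lmodType K) (f : X -> K) : (X -> K) -> K :=
  mmap (@meta X) f.

Definition mlinear (X : lmodType K) (b : X -> X -> K) : Prop :=
  (forall x, finsupp (b x)) /\
  (forall (a : K) (x y : X), b (a *: x + y) = fun z => a * b x z + b y z).

Definition is_coalg (X : lmodType K) (b : X -> X -> K) : Prop :=
  mlinear b /\
  (forall x, mcounit (b x) = x) /\
  (forall x, mcomult (b x) = mmap b (b x)).

Definition is_expansion (X : lmodType K) (B : X -> Prop) (x : X) (f : X -> K) : Prop :=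
  finsupp f /\ (forall y, f y <> 0 -> B y) /\ mcounit f = x.

Definition hamel_basis (X : lmodType K) (B : X -> Prop) : Prop :=
  (forall x, exists f, is_expansion B x f) /\
  (forall f, is_expansion B 0 f -> forall y, f y = 0).

End Multiset.

(* From this we derive the algebraic behaviour of
   the counit (linear, inverse to the unit) and of the functor action [mmap]
   (it only depends on the map on the support; on an injective map it just
   reads off a coefficient).
   - Basis => coalgebra: the coordinate map b of a Hamel basis B is linear
     because expansions are unique; it fixes exactly the basis vectors, so
     delta (b x) = M(b)(b x) as b agrees with the unit on the support of b x.
   - Coalgebra => basis: the counit law makes b injective; comparing both
     sides of the comultiplication law at the point b y shows that every
     vector in the support of some b x is fixed by b.  Hence b x is an
     expansion of x over the fixed vectors, and linearity of b gives
     b (mcounit f) = f for f supported on fixed vectors, i.e. independence. *)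
From HB Require Import structures.
From mathcomp Require Import all_boot all_order all_algebra.
From Stdlib Require Import ClassicalEpsilon FunctionalExtensionality.
Local Open Scope ring_scope.
Import GRing.Theory.
Set Implicit Arguments. Unset Strict Implicit.

Lemma InE (T : eqType) (y : T) (s : seq T) : List.In y s <-> y \in s.
Proof.
elim: s => [|a s IH] //=; rewrite in_cons; split.
- by case=> [->|/IH ->]; rewrite ?eqxx ?orbT.
- by case/orP=> [/eqP ->|/IH]; [left|right].
Qed.

Lemma uniq_NoDup (T : eqType) (s : seq T) : uniq s -> List.NoDup s.
Proof.
elim: s => [|a s IH] /=; first by constructor.
case/andP=> a_notin_s s_uniq; constructor; last exact: IH.
by move/InE; rewrite (negbTE a_notin_s).
Qed.

Lemma NoDup_uniq (T : eqType) (s : seq T) : List.NoDup s -> uniq s.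
Proof.
elim: s => [|a s IH] //= h; inversion h; subst.
by rewrite IH // andbT; apply/negP => /InE.
Qed.

Section FiniteSupport.
Variable K : fieldType.

Lemma fsuppP (Y : eqType) (f : Y -> K) : finsupp f ->
  uniq (fsupp f) /\ (forall y, (y \in fsupp f) = (f y != 0)).
Proof.
case=> s s_cover; rewrite /fsupp.
set P := fun s0 : seq Y =>
  List.NoDup s0 /\ (forall y, List.In y s0 <-> f y <> 0).
have [s0 Ps0] : exists s0, P s0.
  exists (undup [seq y <- s | f y != 0]); split.
    exact/uniq_NoDup/undup_uniq.
  move=> y; rewrite InE mem_undup mem_filter; split; first by case/andP=> /eqP.
  by move=> fy; apply/andP; split; [apply/eqP | apply/InE/s_cover].
have [/NoDup_uniq eps_uniq eps_supp] := epsilon_spec (inhabits [::]) P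
  (ex_intro _ s0 Ps0).
split=> // y; apply/idP/idP; first by move/InE/eps_supp/eqP.
by move/eqP/eps_supp/InE.
Qed.

Lemma fsupp_sum (Y : eqType) (V : nmodType) (f : Y -> K) (G : Y -> V)
    (s : seq Y) :
  finsupp f -> uniq s -> (forall y, f y != 0 -> y \in s) ->
  (forall y, f y = 0 -> G y = 0) ->
  \sum_(y <- fsupp f) G y = \sum_(y <- s) G y.
Proof.
move=> /fsuppP [supp_uniq supp_mem] s_uniq s_cover G0.
have -> : \sum_(y <- s) G y = \sum_(y <- s | f y != 0) G y.
  by rewrite [RHS]big_mkcond; apply: eq_bigr => y _; case: eqP => // /G0.
rewrite -[RHS]big_filter; apply/perm_big/uniq_perm; rewrite ?filter_uniq //.
by move=> y; rewrite !mem_filter supp_mem; case: (f y != 0) (s_cover y) => // ->.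
Qed.

Lemma finsupp_lin (Y : eqType) (a : K) (f g : Y -> K) :
  finsupp f -> finsupp g -> finsupp (fun z => a * f z + g z).
Proof.
case=> s1 h1 [s2 h2]; exists (s1 ++ s2) => y h; apply/InE; rewrite mem_cat.
case: (f y =P 0) => [e|/h1/InE -> //]; rewrite e mulr0 add0r in h.
by have /InE -> := h2 _ h; rewrite orbT.
Qed.

Lemma finsupp_meta (Y : eqType) (x : Y) : finsupp (meta K x).
Proof. by exists [:: x] => y; rewrite /meta; case: eqP => // -> _; left. Qed.

Lemma mmap_eq_on_supp (Y : eqType) (Z : Type) (g h : Y -> Z) (f : Y -> K) :
  finsupp f -> (forall y, f y != 0 -> g y = h y) -> mmap g f = mmap h f.
Proof.
move=> f_fin gh; apply: functional_extensionality => z; rewrite /mmap.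
by apply: eq_big_seq => u; rewrite (fsuppP f_fin).2 => /gh ->.
Qed.

Lemma mmap_inj (Y : eqType) (Z : Type) (g : Y -> Z) (f : Y -> K) (y : Y) :
  finsupp f -> injective g -> mmap g f (g y) = f y.
Proof.
move=> f_fin g_inj; have [supp_uniq supp_mem] := fsuppP f_fin; rewrite /mmap.
case: (boolP (y \in fsupp f)) => [y_supp|].
  rewrite (bigD1_seq y) //=.
  destruct (excluded_middle_informative (g y = g y)) as [gy_eq|gy_neq];
    last by case: gy_neq.
  rewrite big1 ?addr0 // => u /eqP uy.
  by destruct (excluded_middle_informative (g u = g y)) as [guy|];
    first by case: uy; apply: g_inj.
rewrite supp_mem negbK => /eqP fy0; rewrite fy0 big1_seq // => u _.
by destruct (excluded_middle_informative (g u = g y)) as [guy|];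
  first by rewrite /= (g_inj _ _ guy).
Qed.

Lemma mmap_out_of_range (Y : eqType) (Z : Type) (g : Y -> Z) (f : Y -> K)
    (z : Z) :
  ~ (exists y, g y = z) -> mmap g f z = 0.
Proof.
move=> z_out; rewrite /mmap big1 // => u _.
by case: excluded_middle_informative => // gu; case: z_out; exists u.
Qed.

Lemma sum_meta (Y : eqType) (f : Y -> K) (z : Y) : finsupp f ->
  \sum_(u <- fsupp f) f u * meta K u z = f z.
Proof.
move=> f_fin; have [supp_uniq supp_mem] := fsuppP f_fin.
case: (boolP (z \in fsupp f)) => [z_supp|].
  rewrite (bigD1_seq z) //= /meta eqxx mulr1 big1 ?addr0 //.
  by move=> u /negbTE; rewrite eq_sym => ->; rewrite mulr0.
rewrite supp_mem negbK => /eqP fz0.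
rewrite fz0 big1_seq // => u /andP [_ u_supp].
rewrite /meta; case: (z =P u) => [zu|_]; last by rewrite mulr0.
by move: u_supp; rewrite supp_mem -zu fz0 eqxx.
Qed.

End FiniteSupport.

Section Counit.
Variables (K : fieldType) (X : lmodType K).

Lemma mcounit_lin (a : K) (f g : X -> K) : finsupp f -> finsupp g ->
  mcounit (fun z => a * f z + g z) = a *: mcounit f + mcounit g.
Proof.
move=> f_fin g_fin; have fg_fin := finsupp_lin a f_fin g_fin.
case: (f_fin) (g_fin) => s1 h1 [s2 h2]; set s := undup (s1 ++ s2).
have cover_f y : f y != 0 -> y \in s.
  by move/eqP/h1/InE; rewrite mem_undup mem_cat => ->.
have cover_g y : g y != 0 -> y \in s.
  by move/eqP/h2/InE; rewrite mem_undup mem_cat orbC => ->.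
have s_uniq : uniq s := undup_uniq _.
rewrite /mcounit (fsupp_sum (s := s) fg_fin) //; last first.
- by move=> y ->; rewrite scale0r.
- by move=> y; case: (f y =P 0) => [->|/eqP/cover_f //]; rewrite mulr0 add0r; apply: cover_g.
rewrite (fsupp_sum (s := s) f_fin) //; last by move=> y ->; rewrite scale0r.
rewrite (fsupp_sum (s := s) g_fin) //; last by move=> y ->; rewrite scale0r.
by rewrite scaler_sumr -big_split; apply: eq_bigr => y _; rewrite scalerDl scalerA.
Qed.

Lemma mcounit_meta (x : X) : mcounit (meta K x) = x.
Proof.
rewrite /mcounit (fsupp_sum (s := [:: x]) (finsupp_meta K x)) //.
- by rewrite big_seq1 /meta eqxx scale1r.
- by move=> y; rewrite /meta inE; case: (y =P x) => // _; rewrite eqxx.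
- by move=> y ->; rewrite scale0r.
Qed.

Lemma mlinear0 (b : X -> X -> K) : mlinear b -> b 0 = fun _ => 0.
Proof.
move=> [_ b_lin]; have e := b_lin 1 0 0; rewrite scale1r addr0 in e.
apply: functional_extensionality => z.
have /eqP := congr1 (fun F => F z) e; rewrite /= mul1r.
by rewrite -{1}[b 0 z]addr0 eq_sym => /eqP /addrI.
Qed.

Lemma mlinear_sum (b : X -> X -> K) (s : seq X) (c : X -> K) : mlinear b ->
  b (\sum_(u <- s) c u *: u) = fun z => \sum_(u <- s) c u * b u z.
Proof.
move=> b_lin; elim: s => [|a s IH].
  by rewrite big_nil mlinear0 //; apply: functional_extensionality => z; rewrite big_nil.
rewrite big_cons b_lin.2 IH; apply: functional_extensionality => z.
by rewrite big_cons.
Qed.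

End Counit.

Section BasisToCoalgebra.
Variables (K : fieldType) (X : lmodType K) (B : X -> Prop).
Hypothesis B_basis : hamel_basis B.

Lemma expansion_uniq x f g :
  is_expansion B x f -> is_expansion B x g -> f = g.
Proof.
move=> [f_fin [f_B f_x]] [g_fin [g_B g_x]].
have diff0 : is_expansion B 0 (fun z => (-1) * g z + f z).
  split; first exact: finsupp_lin.
  split; last by rewrite mcounit_lin // f_x g_x scaleN1r addNr.
  move=> y; case: (g y =P 0) => [->|/g_B //]; rewrite mulr0 add0r; exact: f_B.
apply: functional_extensionality => z.
by have /eqP := B_basis.2 _ diff0 z; rewrite mulN1r addrC subr_eq0 => /eqP.
Qed.

Lemma coordinate_map_exists :
  exists b : X -> X -> K, forall x, is_expansion B x (b x).
Proof.
exists (fun x => epsilon (inhabits (fun _ => 0)) (is_expansion B x)) => x.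
by apply: epsilon_spec; apply: B_basis.1.
Qed.

Variable b : X -> X -> K.
Hypothesis b_coord : forall x, is_expansion B x (b x).

Lemma coord_fixed x : B x <-> b x = meta K x.
Proof.
split=> [Bx|bx].
  apply: (expansion_uniq (b_coord x)); split; first exact: finsupp_meta.
  split; last exact: mcounit_meta.
  by move=> y; rewrite /meta; case: eqP => // ->.
have [_ [coord_B _]] := b_coord x; apply: coord_B.
by rewrite bx /meta eqxx; apply/eqP/oner_neq0.
Qed.

(* The coordinate map is linear, since linear combinations of expansions
   are expansions of the linear combination. *)
Lemma coord_mlinear : mlinear b.
Proof.
split=> [x|a x y]; first by case: (b_coord x).
apply: (expansion_uniq (b_coord _)).
have [x_fin [x_B x_exp]] := b_coord x; have [y_fin [y_B y_exp]] := b_coord y.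
split; first exact: finsupp_lin.
split; last by rewrite mcounit_lin // x_exp y_exp.
move=> z; case: (b y z =P 0) => [->|/y_B //]; rewrite addr0 => /eqP.
by rewrite mulf_eq0 negb_or => /andP [_ /eqP]; apply: x_B.
Qed.

Lemma coord_is_coalg : is_coalg b.
Proof.
split; first exact: coord_mlinear.
split=> x; first by case: (b_coord x) => _ [].
have [x_fin [x_B _]] := b_coord x.
by apply: mmap_eq_on_supp => // y /eqP /x_B /coord_fixed.
Qed.

End BasisToCoalgebra.

Section CoalgebraToBasis.
Variables (K : fieldType) (X : lmodType K) (b : X -> X -> K).
Hypothesis b_coalg : is_coalg b.

Definition fixed_vector (x : X) : Prop := b x = meta K x.

(* The counit law makes b a split monomorphism. *)
Lemma coalg_injective : injective b.
Proof.
have [_ [b_counit _]] := b_coalg.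
by move=> u v buv; rewrite -(b_counit u) -(b_counit v) buv.
Qed.

(* Every vector in the support of some b x is fixed: evaluate both sides of
   M(eta)(b x) = M(b)(b x) at the point b y. *)
Lemma coalg_support_fixed x y : b x y != 0 -> fixed_vector y.
Proof.
have [[b_fin _] [b_counit b_comult]] := b_coalg => bxy.
have := congr1 (fun F => F (b y)) (b_comult x).
rewrite /mcomult /= mmap_inj //; last exact: coalg_injective.
case: (excluded_middle_informative (exists u, meta K u = b y)) => [[u u_y]|y_out].
  by rewrite /fixed_vector -u_y -(b_counit y) -u_y mcounit_meta.
by rewrite mmap_out_of_range // => bxy0; rewrite -bxy0 eqxx in bxy.
Qed.

Lemma coalg_expansion x : is_expansion fixed_vector x (b x).
Proof.
have [[b_fin _] [b_counit _]] := b_coalg.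
split=> //; split=> // y /eqP; exact: coalg_support_fixed.
Qed.

Lemma coalg_counit_inverse f : finsupp f ->
  (forall y, f y <> 0 -> fixed_vector y) -> b (mcounit f) = f.
Proof.
move=> f_fin f_fixed; have [b_lin _] := b_coalg.
rewrite /mcounit mlinear_sum //; apply: functional_extensionality => z.
rewrite -[RHS](sum_meta z f_fin); apply: eq_big_seq => u.
by rewrite (fsuppP f_fin).2 => /eqP /f_fixed ->.
Qed.

Lemma coalg_hamel_basis : hamel_basis fixed_vector.
Proof.
split=> [x|f [f_fin [f_fixed f_0]] y]; first by exists (b x); apply: coalg_expansion.
by rewrite -(coalg_counit_inverse f_fin f_fixed) f_0 mlinear0 //; case: b_coalg.
Qed.

End CoalgebraToBasis.

Theorem theorem3p2 (K : fieldType) (X : lmodType K) :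
  (forall B : X -> Prop, hamel_basis B ->
     (exists b : X -> X -> K, forall x, is_expansion B x (b x)) /\
     (forall b : X -> X -> K, (forall x, is_expansion B x (b x)) ->
        is_coalg b /\ (forall x, B x <-> b x = meta K x))) /\
  (forall b : X -> X -> K, is_coalg b ->
     hamel_basis (fun x => b x = meta K x) /\
     (forall x, is_expansion (fun y => b y = meta K y) x (b x))).
Proof.
split=> [B B_basis | b b_coalg].
  split; first exact: coordinate_map_exists.
  move=> b b_coord; split; first exact: coord_is_coalg b_coord.
  exact: coord_fixed b_coord.
split; first exact: coalg_hamel_basis.
exact: coalg_expansion.
Qed.
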